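(* Let $m,n\ge1$, $A,B\in\mathbb{R}_+^{m\times n}$, and suppose $\hat\rho(A,B)<\infty$. Write $t_0=\hat\rho(A,B)$. (1) If $\mathbf{y}\in\mathbb{R}^n_+\setminus\{\mathbf{0}\}$ is weakly optimal, then at least one coordinate of $(A-t_0B)\mathbf{y}$ is zero. (2) Suppose $\mathbf{y}$ is weakly optimal with exactly $\ell$ positive coordinates, and let $A',B'\in\mathbb{R}_+^{m\times\ell}$ be the submatrices of $A,B$ formed by the columns indexed by $\operatorname{supp}\mathbf{y}$. If $\ell\ge m$, then $\operatorname{rank}(A'-t_0B')<m$. (3) Every minimal weakly optimal vector has at most $m$ positive coordinates. (4) If $\mathbf{y}$ is minimal weakly optimal with exactly $m$ positive coordinates, then $\mathbf{y}$ is a weak GPF-eigenvector, i.e. $A\mathbf{y}=t_0B\mathbf{y}$, and $\operatorname{rank}(A'-t_0B')=m-1$, with $A',B'$ as in (2). (5) If $\mathbf{y}'$ is minimal weakly optimal with $\ell<m$ positive coordinates, then there exists a minimal weakly optimal $\mathbf{y}$ with $\operatorname{supp}\mathbf{y}=\operatorname{supp}\mathbf{y}'$ such that the set $\mathcal{K}=\{k\in[m]:(A\mathbf{y})_k=t_0(B\mathbf{y})_k\}$ has $|\mathcal{K}|\ge\ell$.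
   Context: $[m]=\{1,\dots,m\}$. For $A,B\in\mathbb{R}_+^{m\times n}$ (entrywise nonnegative real matrices) and $\mathbf{x}\in\mathbb{R}^n_+\setminus\{\mathbf{0}\}$, set $r(A,B,\mathbf{x})=\max_{i\in[m]}\frac{(A\mathbf{x})_i}{(B\mathbf{x})_i}\in[0,\infty]$ with the conventions $\frac00=0$ and $\frac c0=\infty$ for $c>0$; equivalently $r(A,B,\mathbf{x})=\inf\{t\ge 0: A\mathbf{x}\le tB\mathbf{x}\}$. The weak Collatz–Wielandt quotient is $\hat\rho(A,B)=\inf\{r(A,B,\mathbf{x}):\mathbf{x}\in\mathbb{R}^n_+\setminus\{\mathbf{0}\}\}$. A vector $\mathbf{y}\in\mathbb{R}^n_+\setminus\{\mathbf{0}\}$ is weakly optimal if $r(A,B,\mathbf{y})=\hat\rho(A,B)$; it is minimal weakly optimal if it is weakly optimal and no weakly optimal vector has support strictly contained in $\operatorname{supp}\mathbf{y}=\{j:y_j>0\}$. A weak GPF-eigenvector is $\mathbf{y}\in\mathbb{R}^n_+\setminus\{\mathbf{0}\}$ with $A\mathbf{y}=\hat\rho(A,B)B\mathbf{y}$. *)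

From HB Require Import structures.
From mathcomp Require Import all_boot all_order all_algebra.
Set Implicit Arguments. Unset Strict Implicit. Unset Printing Implicit Defensive.
Import Order.TTheory GRing.Theory Num.Theory.
Local Open Scope ring_scope.

Section Defs.
Variable R : realFieldType.

Definition nonneg_mx (p q : nat) (M : 'M[R]_(p, q)) : Prop :=
  forall i j, 0 <= M i j.

(* r(A,B,x) with values in [0, oo]; None encodes oo.
   Conventions: 0/0 = 0 (MathComp has c/0 = 0), c/0 = oo for c > 0. *)
Definition ratioAB (m n : nat) (A B : 'M[R]_(m, n)) (x : 'cV[R]_n) : option R :=
  if [exists i, ((B *m x) i 0 == 0) && (0 < (A *m x) i 0)] then None
  else Some (\big[Num.max/0]_(i < m) ((A *m x) i 0 / (B *m x) i 0)).

(* t is the weak Collatz--Wielandt quotient rho_hat(A,B) and it is finite: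
   t is the infimum over x in R^n_+ \ {0} of r(A,B,x) (infinite values are
   never below a finite bound, so only finite values matter). *)
Definition is_rho_hat (m n : nat) (A B : 'M[R]_(m, n)) (t : R) : Prop :=
  (forall x : 'cV[R]_n, nonneg_mx x -> x != 0 ->
     forall s, ratioAB A B x = Some s -> t <= s) /\
  (forall u : R, (forall x : 'cV[R]_n, nonneg_mx x -> x != 0 ->
     forall s, ratioAB A B x = Some s -> u <= s) -> u <= t).

Definition supp (n : nat) (y : 'cV[R]_n) : {set 'I_n} := [set j | 0 < y j 0].

Definition weakly_optimal (m n : nat) (A B : 'M[R]_(m, n)) (t : R)
  (y : 'cV[R]_n) : Prop :=
  nonneg_mx y /\ y != 0 /\ ratioAB A B y = Some t.

Definition min_weakly_optimal (m n : nat) (A B : 'M[R]_(m, n)) (t : R)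
  (y : 'cV[R]_n) : Prop :=
  weakly_optimal A B t y /\
  (forall z, weakly_optimal A B t z -> ~ (supp z \proper supp y)).

Definition colsub_set (m n : nat) (M : 'M[R]_(m, n)) (S : {set 'I_n})
  : 'M[R]_(m, #|S|) :=
  colsub (fun k : 'I_#|S| => enum_val k) M.

End Defs.

(* A vector [y] is weakly optimal iff [y >= 0], [y <> 0] and [(A - t0 B) y <= 0], while
   no [y >= 0], [y <> 0] makes [(A - t0 B) y] strictly negative, since then [r(A,B,y) < t0].
   Hence no direction [w] supported on [supp y] can strictly decrease all active rows
   (rows where [(A - t0 B) y] vanishes): the active rows of [A' - t0 B'] never have full
   row rank, and the active set is nonempty.  A direction [w] that keeps the active rows
   fixed and is not proportional to [y] can be followed, by a ratio test, until either a
   support coordinate vanishes or a new row becomes active.  For minimal [y] the first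
   is excluded, so the kernel of [A' - t0 B'] lies on the line of [y], which bounds the
   rank from below by [|supp y| - 1]; iterating the step enlarges the active set. *)
From HB Require Import structures.
From mathcomp Require Import all_boot all_order all_algebra.
Import Order.TTheory GRing.Theory Num.Theory.
Local Open Scope ring_scope.
Set Implicit Arguments. Unset Strict Implicit.

Lemma ratio_test (R : realFieldType) (I : finType) (a b : I -> R) :
  (forall i, 0 <= a i) -> (forall i, a i = 0 -> 0 <= b i) -> (exists i, b i < 0) ->
  exists2 s, 0 < s &
    (forall i, 0 <= a i + s * b i) /\ exists2 i, a i != 0 & a i + s * b i = 0.
Proof.
move=> a_ge0 ab [i1 bi1].
case: (@arg_minP _ R I i1 (fun i => b i < 0) (fun i => a i / - b i) bi1) => i0 bi0 i0_min.
have ai0 : a i0 != 0 by apply: contraTneq bi0 => /ab; rewrite leNgt => /negbTE ->.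
have ai0_gt0 : 0 < a i0 by rewrite lt_def ai0 a_ge0.
exists (a i0 / - b i0); first by rewrite divr_gt0 // oppr_gt0.
split; last first.
  by exists i0 => //; rewrite invrN mulrN mulNr -mulrA mulVf ?mulr1 ?subrr ?lt_eqF.
move=> i; have [bi_lt0|bi_ge0] := ltP (b i) 0.
  have := i0_min i bi_lt0; rewrite ler_pdivlMr ?oppr_gt0 // mulrN.
  by rewrite -subr_ge0 opprK.
by rewrite addr_ge0 // mulr_ge0 // divr_ge0 // ?oppr_ge0 ltW.
Qed.

Lemma small_step_pos (R : realFieldType) (I : finType) (a b : I -> R) :
  exists2 s, 0 < s & forall i, 0 < a i -> 0 < a i + s * b i.
Proof.
have [/existsP[i1 Hi1]|] := boolP [exists i, (0 < a i) && (b i < 0)].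
  case: (@arg_minP _ R I i1 (fun i => (0 < a i) && (b i < 0)) (fun i => a i / - b i) Hi1).
  move=> i0 /andP[ai0 bi0] i0_min.
  have s_gt0 : 0 < a i0 / - b i0 by rewrite divr_gt0 // oppr_gt0.
  have s2_gt0 : 0 < a i0 / - b i0 / 2 by rewrite divr_gt0.
  exists (a i0 / - b i0 / 2) => // i ai.
  have [bi_lt0|bi_ge0] := ltP (b i) 0; last by rewrite ltr_wpDr // mulr_ge0 // ltW.
  have := i0_min i; rewrite ai bi_lt0 => /(_ isT); rewrite ler_pdivlMr ?oppr_gt0 //.
  have half_lt : a i0 / - b i0 / 2 * - b i < a i0 / - b i0 * - b i.
    by rewrite ltr_pM2r ?oppr_gt0 // ltr_pdivrMr // ltr_pMr // ltr1n.
  by move=> /(lt_le_trans half_lt); rewrite mulrN -subr_gt0 opprK.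
rewrite negb_exists => /forallP no_neg; exists 1 => // i ai.
by rewrite mul1r ltr_wpDr // leNgt -(andTb (b i < 0)) -ai no_neg.
Qed.

Lemma ker_notin_submx (F : fieldType) (p l k : nat) (N : 'M[F]_(p, l))
    (V : 'M[F]_(k, l)) :
  (\rank N + \rank V < l)%N -> exists2 d : 'cV[F]_l, N *m d = 0 & ~~ (d^T <= V)%MS.
Proof.
move=> rk_lt; have [/existsP[r r_notin]|] := boolP [exists r, ~~ (row r (kermx N^T) <= V)%MS].
  exists (row r (kermx N^T))^T; last by rewrite trmxK.
  by apply: trmx_inj; rewrite trmx_mul trmxK -row_mul mulmx_ker trmx0 row0.
rewrite negb_exists => /forallP rows_in.
have /mxrankS : (kermx N^T <= V)%MS by apply/row_subP => r; have := rows_in r; rewrite negbK.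
by rewrite mxrank_ker mxrank_tr leq_subLR leqNgt rk_lt.
Qed.

Lemma mulmx_surj (F : fieldType) (p l : nat) (N : 'M[F]_(p, l)) (v : 'cV[F]_p) :
  \rank N = p -> exists d, N *m d = v.
Proof.
move=> rkN; have : (v^T <= N^T)%MS by apply: submx_full; rewrite /row_full mxrank_tr rkN.
case/submxP=> D vD.
by exists D^T; apply: trmx_inj; rewrite trmx_mul trmxK.
Qed.

Definition colsel (R : pzSemiRingType) (n : nat) (S : {set 'I_n}) : 'M[R]_(n, #|S|) :=
  colsub enum_val 1%:M.

Lemma colsub_setE (R : realFieldType) (m n : nat) (X : 'M[R]_(m, n)) S :
  colsub_set X S = X *m colsel R S.
Proof. by rewrite /colsel mulmx_colsub mulmx1. Qed.

Lemma trmx_colsel_mul (R : pzSemiRingType) (n : nat) (S : {set 'I_n}) :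
  (colsel R S)^T *m colsel R S = 1%:M.
Proof.
rewrite {2}/colsel mulmx_colsub mulmx1; apply/matrixP => k k'.
by rewrite !mxE (inj_eq enum_val_inj) eq_sym.
Qed.

Lemma colsel_mul_notin (R : pzSemiRingType) (n : nat) (S : {set 'I_n}) (d : 'cV[R]_#|S|) j :
  j \notin S -> (colsel R S *m d) j 0 = 0.
Proof.
move=> jS; rewrite mxE big1 // => k _; rewrite !mxE.
have -> : (j == enum_val k) = false by apply: contraNF jS => /eqP ->; exact: enum_valP.
by rewrite mul0r.
Qed.

Lemma colsel_mulK (R : pzSemiRingType) (n : nat) (S : {set 'I_n}) (y : 'cV[R]_n) :
  (forall j, j \notin S -> y j 0 = 0) -> colsel R S *m ((colsel R S)^T *m y) = y.
Proof.
move=> y_out; rewrite /colsel trmx_mxsub trmx1 mul_rowsub_mx mul1mx.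
apply/matrixP => j i; rewrite (ord1 i) mxE.
under eq_bigr => k _ do rewrite !mxE.
rewrite -(big_enum_val (fun x => (j == x)%:R * y x 0)).
have [jS|jS] := boolP (j \in S).
  rewrite (bigD1 j) //= eqxx mul1r big1 ?addr0 // => x /andP[_ /negbTE].
  by rewrite eq_sym => ->; rewrite mul0r.
rewrite y_out // big1 // => x xS.
have -> : (j == x) = false by apply: contraNF jS => /eqP ->.
by rewrite mul0r.
Qed.

Lemma colsel_mul_scale (R : realFieldType) (n : nat) (S : {set 'I_n}) (d : 'cV[R]_#|S|)
    (y : 'cV[R]_n) c :
  colsel R S *m d = c *: y -> (d^T <= ((colsel R S)^T *m y)^T)%MS.
Proof.
move=> Pd; rewrite -[d]mul1mx -(trmx_colsel_mul R S) -mulmxA Pd -scalemxAr linearZ /=.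
exact/scalemx_sub/submx_refl.
Qed.

Lemma mulmx_nonneg (R : realFieldType) (m n : nat) (A : 'M[R]_(m, n)) (x : 'cV[R]_n) i :
  nonneg_mx A -> nonneg_mx x -> 0 <= (A *m x) i 0.
Proof. by move=> A_ge0 x_ge0; rewrite mxE sumr_ge0 // => j _; rewrite mulr_ge0. Qed.

Lemma mulmxDZE (R : comPzRingType) (p q : nat) (N : 'M[R]_(p, q)) (y w : 'cV[R]_q) s i :
  (N *m (y + s *: w)) i 0 = (N *m y) i 0 + s * (N *m w) i 0.
Proof. by rewrite mulmxDr -scalemxAr !mxE. Qed.

Lemma notin_supp (R : realFieldType) (n : nat) (y : 'cV[R]_n) j :
  nonneg_mx y -> (j \notin supp y) = (y j 0 == 0).
Proof. by move=> y_ge0; rewrite inE lt_def y_ge0 andbT negbK. Qed.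

Lemma ratioAB_Some_inv (R : realFieldType) (m n : nat) (A B : 'M[R]_(m, n)) x s :
  ratioAB A B x = Some s ->
  (forall i, (B *m x) i 0 = 0 -> (A *m x) i 0 <= 0) /\
  s = \big[Num.max/0]_(i < m) ((A *m x) i 0 / (B *m x) i 0).
Proof.
rewrite /ratioAB; case: ifP => // /negbT; rewrite negb_exists => /forallP no_inf [<-].
by split=> // i Bi; have := no_inf i; rewrite Bi eqxx /= leNgt.
Qed.

Lemma ratioAB_Some (R : realFieldType) (m n : nat) (A B : 'M[R]_(m, n)) x :
  (forall i, (B *m x) i 0 = 0 -> (A *m x) i 0 <= 0) ->
  ratioAB A B x = Some (\big[Num.max/0]_(i < m) ((A *m x) i 0 / (B *m x) i 0)).
Proof.
move=> fin; rewrite /ratioAB ifF //; apply/negbTE; rewrite negb_exists.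
by apply/forallP => i; apply/negP => /andP[/eqP/fin]; rewrite leNgt => /negP.
Qed.

Section WeakOptimality.
Variables (R : realFieldType) (m n : nat) (A B : 'M[R]_(m, n)) (t0 : R).
Hypotheses (m_gt0 : (0 < m)%N) (A_ge0 : nonneg_mx A) (B_ge0 : nonneg_mx B)
  (t0_rho : is_rho_hat A B t0).

Local Notation M := (A - t0 *: B).

Lemma rho_hat_ge0 : 0 <= t0.
Proof.
apply: t0_rho.2 => x _ _ s /ratioAB_Some_inv[_ ->].
by rewrite leNgt; apply/negP => /bigmax_ltP[]; rewrite ltxx.
Qed.

Lemma mulmx_subE (y : 'cV[R]_n) i :
  (M *m y) i 0 = (A *m y) i 0 - t0 * (B *m y) i 0.
Proof. by rewrite mulmxBl -scalemxAl !mxE. Qed.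

Lemma weakly_optimalP (z : 'cV[R]_n) :
  weakly_optimal A B t0 z <-> [/\ nonneg_mx z, z != 0 & forall i, (M *m z) i 0 <= 0].
Proof.
have Bz_gt0 i : nonneg_mx z -> (B *m z) i 0 != 0 -> 0 < (B *m z) i 0.
  by move=> z_ge0 Bi; rewrite lt_def Bi mulmx_nonneg.
split=> [[z_ge0 [z0 /ratioAB_Some_inv[fin t0E]]]|[z_ge0 z0 Mz_le0]].
  split=> // i; rewrite mulmx_subE.
  have [Bi|/(Bz_gt0 i z_ge0) Bi] := eqVneq ((B *m z) i 0) 0.
    by rewrite Bi mulr0 subr0 fin.
  rewrite subr_le0 -ler_pdivrMr // t0E.
  exact: (le_bigmax _ (fun i : 'I_m => (A *m z) i 0 / (B *m z) i 0)).
have fin i : (B *m z) i 0 = 0 -> (A *m z) i 0 <= 0.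
  by move=> Bi; have := Mz_le0 i; rewrite mulmx_subE Bi mulr0 subr0.
do 2!split=> //; rewrite (ratioAB_Some fin); congr Some; apply/le_anti/andP; split.
  apply/bigmax_leP; split=> [|i _]; first exact: rho_hat_ge0.
  have [Bi|/(Bz_gt0 i z_ge0) Bi] := eqVneq ((B *m z) i 0) 0.
    by rewrite Bi invr0 mulr0 rho_hat_ge0.
  by rewrite ler_pdivrMr // -subr_le0 -mulmx_subE.
by apply: t0_rho.1 z z_ge0 z0 _ (ratioAB_Some fin).
Qed.

Lemma no_strict_descent (z : 'cV[R]_n) :
  nonneg_mx z -> z != 0 -> ~ (forall i, (M *m z) i 0 < 0).
Proof.
move=> z_ge0 z0 Mz_lt0.
have Bz_gt0 i : 0 < (B *m z) i 0.
  rewrite lt_def mulmx_nonneg // andbT; apply: contraTneq (Mz_lt0 i) => Bi.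
  by rewrite mulmx_subE Bi mulr0 subr0 -leNgt mulmx_nonneg.
have t0_gt0 : 0 < t0.
  rewrite lt_def rho_hat_ge0 andbT; apply: contraTneq (Mz_lt0 (Ordinal m_gt0)) => t0_0.
  by rewrite mulmx_subE t0_0 mul0r subr0 -leNgt mulmx_nonneg.
have fin i : (B *m z) i 0 = 0 -> (A *m z) i 0 <= 0.
  by move=> Bi; have := Bz_gt0 i; rewrite Bi ltxx.
have := t0_rho.1 z z_ge0 z0 _ (ratioAB_Some fin); apply/negP; rewrite -ltNge.
apply/bigmax_ltP; split=> // i _.
by rewrite ltr_pdivrMr // -subr_lt0 -mulmx_subE.
Qed.

Definition active (y : 'cV[R]_n) : {set 'I_m} :=
  [set i | (A *m y) i 0 == t0 * (B *m y) i 0].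

Lemma in_active (y : 'cV[R]_n) i : (i \in active y) = ((M *m y) i 0 == 0).
Proof. by rewrite inE mulmx_subE subr_eq0. Qed.

(* Coordinates of [y] and slacks of the constraints [M y <= 0], indexed jointly so that
   one ratio test controls both the support and the active rows. *)
Definition slack (y : 'cV[R]_n) (k : 'I_n + 'I_m) : R :=
  match k with inl j => y j 0 | inr i => - (M *m y) i 0 end.

Lemma slackD (y w : 'cV[R]_n) s k : slack (y + s *: w) k = slack y k + s * slack w k.
Proof.
by case: k => [j|i] /=; rewrite ?mulmxDZE ?opprD ?mulrN // !mxE.
Qed.

Lemma no_descent_direction (y w : 'cV[R]_n) :
  weakly_optimal A B t0 y -> (forall j, j \notin supp y -> w j 0 = 0) ->
  ~ (forall i, i \in active y -> (M *m w) i 0 < 0).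
Proof.
move=> /weakly_optimalP[y_ge0 y0 My_le0] w_out w_desc.
have [s s_gt0 s_pos] := small_step_pos (slack y) (slack w).
have z_gt0 k : 0 < slack y k -> 0 < slack (y + s *: w) k by rewrite slackD; apply: s_pos.
apply: (@no_strict_descent (y + s *: w)).
- move=> j i; rewrite (ord1 i); have [yj|yj] := boolP (j \in supp y).
    by apply: ltW; apply: (z_gt0 (inl j)); rewrite inE in yj.
  by rewrite !mxE w_out // mulr0 addr0.
- have /matrix0Pn[j [i]] := y0; rewrite (ord1 i) => yj.
  apply/matrix0Pn; exists j, 0; rewrite gt_eqF //.
  by apply: (z_gt0 (inl j)); rewrite /= lt_def yj y_ge0.
- move=> i; have [Myi|Myi] := eqVneq ((M *m y) i 0) 0.
    by rewrite mulmxDZE Myi add0r pmulr_rlt0 // w_desc // in_active Myi.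
  rewrite -oppr_gt0; apply: (z_gt0 (inr i)) => /=.
  by rewrite oppr_gt0 lt_neqAle Myi My_le0.
Qed.

Lemma weakly_optimal_active_neq0 (y : 'cV[R]_n) : weakly_optimal A B t0 y -> active y != set0.
Proof.
move=> yo; apply/negP => /eqP act0.
apply: (@no_descent_direction y 0 yo) => [j _|i]; first by rewrite mxE.
by rewrite act0 inE.
Qed.

Lemma rank_rowsub_lt (y : 'cV[R]_n) p (f : 'I_p -> 'I_m) :
  weakly_optimal A B t0 y -> {subset active y <= codom f} ->
  (\rank (rowsub f (M *m colsel R (supp y))) < p)%N.
Proof.
move=> yo f_onto; rewrite ltn_neqAle rank_leq_row andbT; apply/eqP => rk_full.
have [d Md] := mulmx_surj (const_mx (-1)) rk_full.
apply: (@no_descent_direction y (colsel R (supp y) *m d) yo) => [j|i].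
  exact: colsel_mul_notin.
move=> /f_onto/codomP[k ->]; have := congr1 (fun N : 'cV[R]_p => N k 0) Md.
by rewrite mul_rowsub_mx mxE mulmxA => ->; rewrite mxE oppr_lt0 ltr01.
Qed.

Lemma flat_direction_step (y w : 'cV[R]_n) :
  weakly_optimal A B t0 y -> (forall j, j \notin supp y -> w j 0 = 0) ->
  (forall c, w != c *: y) -> (forall i, i \in active y -> (M *m w) i 0 = 0) ->
  exists2 z, exists s, z = y + s *: w &
    [/\ weakly_optimal A B t0 z, supp z \subset supp y, active y \subset active z
      & supp z \proper supp y \/ active y \proper active z].
Proof.
move=> yo; wlog [j1 wj1] : w / exists j, w j 0 < 0.
  move=> core w_out w_ny w_flat.
  have [/existsP neg|] := boolP [exists j, w j 0 < 0]; first exact: core.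
  rewrite negb_exists => /forallP w_ge0.
  have neg_w : exists j, (- w) j 0 < 0.
    have /matrix0Pn[j [i]] : w != 0 by rewrite -(scale0r y) w_ny.
    rewrite (ord1 i) => wj; exists j; rewrite mxE oppr_lt0 lt_def wj.
    by have := w_ge0 j; rewrite -leNgt.
  have out_w j : j \notin supp y -> (- w) j 0 = 0.
    by move=> /w_out wj; rewrite mxE wj oppr0.
  have ny_w c : - w != c *: y.
    by rewrite -[X in _ != X]opprK -scaleNr eqr_opp w_ny.
  have flat_w i : i \in active y -> (M *m - w) i 0 = 0.
    by move=> /w_flat Mw; rewrite mulmxN mxE Mw oppr0.
  have [z [s zE] zP] := core (- w) neg_w out_w ny_w flat_w.
  by exists z => //; exists (- s); rewrite zE scaleNr scalerN.
move=> w_out w_ny w_flat; have [y_ge0 y0 My_le0] := (weakly_optimalP y).1 yo.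
have slack_ge0 k : 0 <= slack y k by case: k => [j|i] /=; rewrite ?oppr_ge0.
have slack_flat k : slack y k = 0 -> 0 <= slack w k.
  case: k => [j|i] /= /eqP; first by rewrite -notin_supp // => /w_out ->.
  by rewrite oppr_eq0 -in_active => /w_flat ->; rewrite oppr0.
have [s s_gt0 [z_ge0 [k yk zk]]] := ratio_test slack_ge0 slack_flat (ex_intro _ (inl j1) wj1).
set z := y + s *: w; exists z; first by exists s.
have {}z_ge0 k' : 0 <= slack z k' by rewrite slackD.
have {}zk : slack z k = 0 by rewrite slackD.
have supp_z : supp z \subset supp y.
  apply/subsetP => j; apply: contraTT; rewrite notin_supp // => /eqP yj0.
  by rewrite inE !mxE yj0 w_out ?notin_supp ?yj0 // mulr0 addr0 ltxx.
have active_z : active y \subset active z.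
  apply/subsetP => i iy; move: (iy); rewrite !in_active mulmxDZE => /eqP ->.
  by rewrite w_flat // mulr0 addr0.
split=> //.
- apply/weakly_optimalP; split=> [j i||i]; first by rewrite (ord1 i); exact: (z_ge0 (inl j)).
    apply: contraNneq (w_ny (- s^-1)) => /eqP; rewrite /z addr_eq0 => /eqP y_sw.
    by apply/eqP; rewrite y_sw scaleNr scalerN opprK scalerK ?gt_eqF.
  by rewrite -oppr_ge0; exact: (z_ge0 (inr i)).
- case: k yk zk => [j|i] /= yk zk; [left|right]; apply/properP; split=> //.
    by exists j; rewrite !inE ?zk ?ltxx // lt_def yk y_ge0.
  by exists i; rewrite in_active -oppr_eq0 ?zk ?yk ?eqxx.
Qed.

Lemma rank_lt_rows (y : 'cV[R]_n) :
  weakly_optimal A B t0 y -> (\rank (M *m colsel R (supp y)) < m)%N.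
Proof.
move=> yo; rewrite (_ : M *m _ = rowsub id (M *m colsel R (supp y))).
  exact: rank_rowsub_lt yo (fun i _ => codom_f id i).
by apply/matrixP => i j; rewrite [RHS]mxE.
Qed.

Lemma min_weakly_optimal_ker (y : 'cV[R]_n) (d : 'cV[R]_#|supp y|) :
  min_weakly_optimal A B t0 y -> (M *m colsel R (supp y)) *m d = 0 ->
  (d^T <= ((colsel R (supp y))^T *m y)^T)%MS.
Proof.
move=> [yo y_min] Md; apply/idPn => d_off.
have Mw i : (M *m (colsel R (supp y) *m d)) i 0 = 0 by rewrite mulmxA Md mxE.
have [||z [s ->] [zo _ _ [supp_lt|act_lt]]] :=
  flat_direction_step yo (@colsel_mul_notin _ _ _ d).
- by move=> c; apply: contraNneq d_off; exact: colsel_mul_scale.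
- by move=> i _; exact: Mw.
- exact: y_min supp_lt.
have act_eq : active (y + s *: (colsel R (supp y) *m d)) = active y.
  by apply/setP => i; rewrite !in_active mulmxDZE Mw mulr0 addr0.
by rewrite act_eq properxx in act_lt.
Qed.

Lemma min_weakly_optimal_rank (y : 'cV[R]_n) :
  min_weakly_optimal A B t0 y ->
  (#|supp y| <= (\rank (M *m colsel R (supp y))).+1)%N.
Proof.
move=> ymin; rewrite leqNgt; apply/negP => rk_lt.
have rk_sum : (\rank (M *m colsel R (supp y)) + \rank ((colsel R (supp y))^T *m y)^T
    < #|supp y|)%N.
  by apply: leq_ltn_trans rk_lt; rewrite -[X in (_ <= X)%N]addn1 leq_add2l rank_leq_row.
have [d Md] := ker_notin_submx rk_sum.
by rewrite (min_weakly_optimal_ker ymin Md).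
Qed.

Lemma min_weakly_optimal_eigen (y : 'cV[R]_n) :
  min_weakly_optimal A B t0 y -> (\rank (M *m colsel R (supp y)) < #|supp y|)%N ->
  M *m y = 0.
Proof.
move=> ymin rk_lt.
have rk_sum : (\rank (M *m colsel R (supp y)) + \rank (0 : 'M[R]_(1, #|supp y|))%R
    < #|supp y|)%N by rewrite mxrank0 addn0.
have [d Md d_off] := ker_notin_submx rk_sum.
have d0 : d != 0 by apply: contraNneq d_off => ->; rewrite trmx0 sub0mx.
have /sub_rVP[c dE] := min_weakly_optimal_ker ymin Md.
have {}dE : d = c *: ((colsel R (supp y))^T *m y) by apply: trmx_inj; rewrite dE linearZ.
have c0 : c != 0 by apply: contraNneq d0 => c0; rewrite dE c0 scale0r.
have yK : colsel R (supp y) *m ((colsel R (supp y))^T *m y) = y.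
  by apply: colsel_mulK => j; rewrite notin_supp; [move/eqP | exact: ymin.1.1].
move: Md; rewrite dE -scalemxAr -mulmxA yK => /eqP.
by rewrite scalemx_eq0 (negbTE c0) => /eqP.
Qed.

Lemma min_weakly_optimal_supp (y z : 'cV[R]_n) :
  min_weakly_optimal A B t0 y -> weakly_optimal A B t0 z -> supp z = supp y ->
  min_weakly_optimal A B t0 z.
Proof. by move=> [_ y_min] zo zy; split=> // x xo; rewrite zy; exact: y_min. Qed.

Lemma active_grow (y : 'cV[R]_n) :
  min_weakly_optimal A B t0 y -> (#|active y| < #|supp y|)%N ->
  exists2 z, min_weakly_optimal A B t0 z & supp z = supp y /\ (#|active y| < #|active z|)%N.
Proof.
move=> ymin act_lt; have yo := ymin.1.
pose N := rowsub (enum_val (A := active y)) (M *m colsel R (supp y)).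
have N_lt : (\rank N < #|active y|)%N.
  by apply: rank_rowsub_lt yo _ => i iK; rewrite -(enum_rankK_in iK iK) codom_f.
have rk_sum : (\rank N + \rank ((colsel R (supp y))^T *m y)^T < #|supp y|)%N.
  apply: leq_ltn_trans act_lt; apply: leq_trans N_lt.
  by rewrite -[X in (_ <= X)%N]addn1 leq_add2l rank_leq_row.
have [d Nd d_off] := ker_notin_submx rk_sum.
have [||z [s zE] [zo z_sub act_sub [supp_lt|act_lt']]] :=
  flat_direction_step yo (@colsel_mul_notin _ _ _ d).
- by move=> c; apply: contraNneq d_off; exact: colsel_mul_scale.
- move=> i iK; have := congr1 (fun X : 'cV[R]_#|active y| => X (enum_rank_in iK i) 0) Nd.
  by rewrite /N mul_rowsub_mx [X in X = _]mxE [X in _ = X]mxE enum_rankK_in // mulmxA.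
- by case: (ymin.2 z zo).
have zy : supp z = supp y.
  apply/eqP; apply/negPn/negP => zy; apply: (ymin.2 z zo).
  by rewrite properEneq zy z_sub.
by exists z; [exact: min_weakly_optimal_supp zo zy | split=> //; exact: proper_card].
Qed.

Lemma exists_min_weakly_optimal_active (y : 'cV[R]_n) :
  min_weakly_optimal A B t0 y ->
  exists2 z, min_weakly_optimal A B t0 z & supp z = supp y /\ (#|supp y| <= #|active z|)%N.
Proof.
move=> ymin; suff grow k : (k <= #|supp y|)%N ->
    exists2 z, min_weakly_optimal A B t0 z & supp z = supp y /\ (k <= #|active z|)%N.
  exact: grow.
elim: k => [_|k IHk k_lt]; first by exists y.
have [z zmin [zy k_le]] := IHk (ltnW k_lt).
have [k_lt_act|act_le] := ltnP k #|active z|; first by exists z.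
have act_lt : (#|active z| < #|supp z|)%N by rewrite zy; exact: leq_ltn_trans act_le k_lt.
have [z' z'min [z'z act_lt']] := active_grow zmin act_lt.
by exists z' => //; split; [rewrite z'z | exact: leq_ltn_trans k_le act_lt'].
Qed.

End WeakOptimality.

Unset Implicit Arguments.

Theorem theorem5p1 (R : realFieldType) (m n : nat) (A B : 'M[R]_(m, n)) (t0 : R) :
  (0 < m)%N -> (0 < n)%N ->
  nonneg_mx A -> nonneg_mx B ->
  is_rho_hat A B t0 ->
  (forall y : 'cV[R]_n, weakly_optimal A B t0 y ->
     exists i : 'I_m, ((A - t0 *: B) *m y) i 0 = 0) /\
  (forall y : 'cV[R]_n, weakly_optimal A B t0 y ->
     (m <= #|supp y|)%N ->
     (\rank (colsub_set A (supp y) - t0 *: colsub_set B (supp y))%R < m)%N) /\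
  (forall y : 'cV[R]_n, min_weakly_optimal A B t0 y -> (#|supp y| <= m)%N) /\
  (forall y : 'cV[R]_n, min_weakly_optimal A B t0 y -> #|supp y| = m ->
     A *m y = t0 *: (B *m y) /\
     \rank (colsub_set A (supp y) - t0 *: colsub_set B (supp y))%R = m.-1) /\
  (forall y' : 'cV[R]_n, min_weakly_optimal A B t0 y' -> (#|supp y'| < m)%N ->
     exists y : 'cV[R]_n, min_weakly_optimal A B t0 y /\ supp y = supp y' /\
       (#|supp y'| <= #|[set k : 'I_m | ((A *m y) k 0 == t0 * (B *m y) k 0)%R]|)%N).
Proof.
move=> m_gt0 _ A_ge0 B_ge0 t0_rho.
have colsubE S : colsub_set A S - t0 *: colsub_set B S = (A - t0 *: B) *m colsel R S.
  by rewrite !colsub_setE mulmxBl scalemxAl.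
have rk_lt y := @rank_lt_rows _ _ _ _ _ _ m_gt0 A_ge0 B_ge0 t0_rho y.
have rk_ge y := @min_weakly_optimal_rank _ _ _ _ _ _ B_ge0 t0_rho y.
split.
  move=> y /(weakly_optimal_active_neq0 m_gt0 A_ge0 B_ge0 t0_rho)/set0Pn[i].
  by rewrite in_active => /eqP; exists i.
split; first by move=> y yo _; rewrite colsubE; exact: rk_lt.
split; first by move=> y ymin; exact: leq_trans (rk_ge y ymin) (rk_lt y ymin.1).
split.
  move=> y ymin supp_m; rewrite colsubE; have rk := rk_lt y ymin.1.
  have := rk_ge y ymin; rewrite [X in (X <= _)%N]supp_m => rk'.
  split; last by apply/eqP; rewrite -eqSS prednK // eqn_leq rk rk'.
  apply/eqP; rewrite -subr_eq0 scalemxAl -mulmxBl; apply/eqP.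
  apply: (min_weakly_optimal_eigen B_ge0 t0_rho ymin).
  by rewrite [X in (_ < X)%N]supp_m.
move=> y' y'min _.
have [y ymin [yy' act]] := exists_min_weakly_optimal_active m_gt0 A_ge0 B_ge0 t0_rho y'min.
by exists y.
Qed.
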